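(* Let $X\in\mathbb{R}^{n\times p}$, $y\in\mathbb{R}^n$, $\lambda\ge0$, $\mu>0$, $A=X^\top X$, $\eta=\lambda_{\max}(\mu A^\top A)+1$, $K\ge1$ and a partition $I_1,\dots,I_K$ of $\{1,\dots,p\}$ into nonempty sets. Let $\{g^t=(\beta^t,z^t,u^t)\}_{t\ge0}$ be generated by Algorithm 1 or by Algorithm 2 (defined below) from an arbitrary initial point, and assume the set $\Omega^*$ of saddle points of the Lagrangian $L$ (defined below) is nonempty. Then: (1) (Global convergence) $g^t$ converges to some $g^*=(\beta^*,z^*,u^* )\in\Omega^*$; (2) (Rate) for every integer $T>0$, $$\|g^T-g^{T+1}\|_{H}^2\le \frac{1}{T+1}\|g^0-g^*\|_H^2,$$ where $H$ is the positive definite matrix defined below.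
   Context: Notation: $\mathcal{S}_\tau(v)=\mathrm{sign}(v)\odot\max\{|v|-\tau,0\}$ (componentwise soft thresholding); $\lambda_{\max}$ is the largest eigenvalue; $\|v\|_H=\sqrt{v^\top Hv}$. $X_i$ is the submatrix of $X$ with columns in $I_i$, $A_i=X^\top X_i$, $\beta_{i\cdot}$ is the subvector of $\beta$ indexed by $I_i$ (so $A\beta=\sum_iA_i\beta_{i\cdot}$). Let $\mathcal{Z}_0=\{z\in\mathbb{R}^p:\|z\|_\infty\le n\lambda\}$ and $\delta_{\mathcal{Z}_0}(z)=0$ if $z\in\mathcal{Z}_0$, $+\infty$ otherwise. The Lagrangian is $L(\beta,z;u)=\|\beta\|_1+\delta_{\mathcal{Z}_0}(z)-u^\top(A\beta-z-X^\top y)$ on $\mathbb{R}^p\times\mathbb{R}^p\times\mathbb{R}^p$; $\Omega^*$ is the set of $(\beta^*,z^*,u^* )$ with $L(\beta^*,z^*,u)\le L(\beta^*,z^*,u^* )\le L(\beta,z,u^* )$ for all $(\beta,z,u)$. Algorithm 1, for $t\ge0$: $\beta^{t+1}=\mathcal{S}_{1/\eta}(\beta^t+A^\top u^t/\eta)$; $z^{t+1}=\min\{\max\{z^t-u^t/\mu,-n\lambda\},n\lambda\}$; $u^{t+1}=u^t-\frac{\mu}{2}[2(A\beta^{t+1}-z^{t+1}-X^\top y)-(A\beta^t-z^t-X^\top y)]$. Algorithm 2, for $t\ge0$: $\beta^{t+1}_{i\cdot}=\mathcal{S}_{1/\eta}(\beta^t_{i\cdot}+A_i^\top u^t/\eta)$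 for $i=1,\dots,K$; $z^{t+1}$ as in Algorithm 1; $u^{t+1}=u^t-\frac{\mu}{2}[2(\sum_iA_i\beta^{t+1}_{i\cdot}-z^{t+1}-X^\top y)-(\sum_iA_i\beta^{t}_{i\cdot}-z^t-X^\top y)]$. The matrix $H\in\mathbb{R}^{3p\times3p}$ (acting on $g=(\beta,z,u)$) is $$H=\begin{pmatrix}\mu A^\top A+S & 0 & A^\top\\ 0 & \mu I_p & -I_p\\ A & -I_p & \frac{2}{\mu}I_p\end{pmatrix},\qquad S=\eta I_p-\mu A^\top A.$$ *)

From HB Require Import structures.
From mathcomp Require Import all_boot all_order all_algebra.
From mathcomp Require Import all_classical all_reals all_analysis.
Set Implicit Arguments. Unset Strict Implicit. Unset Printing Implicit Defensive.
Import Order.TTheory GRing.Theory Num.Theory.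
Import numFieldNormedType.Exports.
Local Open Scope ring_scope.

Section Defs.
Variable R : realType.

Definition soft (m : nat) (tau : R) (v : 'cV[R]_m) : 'cV[R]_m :=
  \col_i (Num.sg (v i 0) * Num.max (`|v i 0| - tau) 0).

(* componentwise projection onto Z0 = { z : ||z||_oo <= n*lam } *)
Definition clip (p : nat) (c : R) (v : 'cV[R]_p) : 'cV[R]_p :=
  \col_i Num.min (Num.max (v i 0) (- c)) c.

Definition norm1 (p : nat) (v : 'cV[R]_p) : R := \sum_i `|v i 0|.

Definition is_lambda_max (p : nat) (M : 'M[R]_p) (lmax : R) : Prop :=
  eigenvalue M lmax /\ (forall a, eigenvalue M a -> a <= lmax).

Definition block (p K : nat) (blk : 'I_p -> 'I_K) (i : 'I_K) : {set 'I_p} :=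
  [set j | blk j == i].

(* selection matrix: column k of sel I is the k-th element of I; so
   X *m sel I = X_I (columns indexed by I) and (sel I)^T *m b = b_I *)
Definition sel (p : nat) (I : {set 'I_p}) : 'M[R]_(p, #|I|) :=
  \matrix_(j, k) (j == enum_val k)%:R.

Definition residual (n p : nat) (X : 'M[R]_(n, p)) (y : 'cV[R]_n)
  (Ab z : 'cV[R]_p) : 'cV[R]_p := Ab - z - X^T *m y.

Definition algorithm1 (n p : nat) (X : 'M[R]_(n, p)) (y : 'cV[R]_n)
  (lam mu eta : R) (beta z u : nat -> 'cV[R]_p) : Prop :=
  let A := X^T *m X in
  forall t : nat,
    [/\ beta t.+1 = soft eta^-1 (beta t + eta^-1 *: (A^T *m u t)),
        z t.+1 = clip (n%:R * lam) (z t - mu^-1 *: u t) &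
        u t.+1 = u t - (mu / 2) *:
          (2 *: residual X y (A *m beta t.+1) (z t.+1)
             - residual X y (A *m beta t) (z t))].

Definition algorithm2 (n p K : nat) (blk : 'I_p -> 'I_K) (X : 'M[R]_(n, p))
  (y : 'cV[R]_n) (lam mu eta : R) (beta z u : nat -> 'cV[R]_p) : Prop :=
  let A := X^T *m X in
  let Ai := fun i : 'I_K => X^T *m (X *m sel (block blk i)) in
  let bi := fun (i : 'I_K) (b : 'cV[R]_p) => (sel (block blk i))^T *m b in
  let sumAb := fun b : 'cV[R]_p => \sum_(i < K) Ai i *m bi i b in
  forall t : nat,
    [/\ (forall i : 'I_K,
           bi i (beta t.+1) = soft eta^-1 (bi i (beta t) + eta^-1 *: ((Ai i)^T *m u t))),
        z t.+1 = clip (n%:R * lam) (z t - mu^-1 *: u t) &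
        u t.+1 = u t - (mu / 2) *:
          (2 *: residual X y (sumAb (beta t.+1)) (z t.+1)
             - residual X y (sumAb (beta t)) (z t))].

Definition deltaZ0 (n p : nat) (lam : R) (z : 'cV[R]_p) : \bar R :=
  if [forall i, `|z i 0| <= n%:R * lam] then 0%E else +oo%E.

Definition lagrangian (n p : nat) (X : 'M[R]_(n, p)) (y : 'cV[R]_n) (lam : R)
  (beta z u : 'cV[R]_p) : \bar R :=
  ((norm1 beta)%:E + deltaZ0 n lam z
    + (- (u^T *m residual X y ((X^T *m X) *m beta) z) 0 0)%:E)%E.

Definition saddle (n p : nat) (X : 'M[R]_(n, p)) (y : 'cV[R]_n) (lam : R)
  (bs zs us : 'cV[R]_p) : Prop :=
  forall beta z u : 'cV[R]_p,
    (lagrangian X y lam bs zs u <= lagrangian X y lam bs zs us)%E /\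
    (lagrangian X y lam bs zs us <= lagrangian X y lam beta z us)%E.

(* the matrix H acting on g = (beta, z, u) stacked as a column of size p+p+p *)
Definition Hmat (n p : nat) (X : 'M[R]_(n, p)) (mu eta : R) : 'M[R]_(p + p + p) :=
  let A := X^T *m X in
  let S := eta%:M - mu *: (A^T *m A) in
  block_mx (block_mx (mu *: (A^T *m A) + S) 0 0 (mu%:M))
           (col_mx (A^T) (- 1%:M))
           (row_mx A (- 1%:M))
           ((2 / mu)%:M).

Definition stack (p : nat) (b z u : 'cV[R]_p) : 'cV[R]_(p + p + p) :=
  col_mx (col_mx b z) u.

Definition Hnorm2 (p : nat) (H : 'M[R]_(p + p + p)) (g : 'cV[R]_(p + p + p)) : R :=
  (g^T *m H *m g) 0 0.

End Defs.

From HB Require Import structures.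
From mathcomp Require Import all_boot all_order all_algebra.
From mathcomp Require Import all_classical all_reals all_analysis.
From mathcomp Require Import ring lra.
Import Order.TTheory GRing.Theory Num.Theory.
Import numFieldNormedType.Exports.
Local Open Scope classical_set_scope.
Local Open Scope ring_scope.
Set Implicit Arguments. Unset Strict Implicit. Unset Printing Implicit Defensive.

(* Both algorithms perform the same linearized ADMM step T on g = (beta, z, u):
   soft thresholding acts componentwise, so the block update of Algorithm 2
   coincides with the full update of Algorithm 1.  Each step is characterized
   by the variational inequalities of its three substeps; adding them for two
   steps and eliminating the multiplier through the u-update gives
   <Tg - Tg', (g - Tg) - (g' - Tg')>_H >= 0.  Against a saddle point s, which
   is a fixed point of T, this is the Fejer inequality
   |Tg - s|_H^2 + |g - Tg|_H^2 <= |g - s|_H^2, and between consecutive steps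
   it shows that |g^t - g^(t+1)|_H is nonincreasing; together they give the
   O(1/T) rate.  Since the largest Rayleigh quotient of mu A^T A is an
   eigenvalue, eta I - mu A^T A >= I and H is positive definite.  Hence the
   iterates are bounded and have a cluster point; as the steps vanish and T
   is Lipschitz, the cluster point is a fixed point, i.e. a KKT point, and
   Fejer monotonicity with respect to it makes the whole sequence converge. *)

(** * Inner products and proximal maps *)

Section ScalarProx.
Variable R : realType.
Implicit Types a b c tau w x : R.

Definition soft_thr tau w : R := Num.sg w * Num.max (`|w| - tau) 0.

Definition clamp c w : R := Num.min (Num.max w (- c)) c.

Lemma soft_thrE tau w : 0 < tau ->
  soft_thr tau w = if tau < w then w - tau else if w < - tau then w + tau else 0.
Proof.
move=> tau_gt0; rewrite /soft_thr.
have [w_lt0|w_gt0|->] := ltrgtP w 0.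
- rewrite ltr0_sg // ltr0_norm //; case: ifP => ?; first lra.
  by case: ifP => ?; [rewrite max_l; [ring|lra] | rewrite max_r; [ring|lra]].
- rewrite gtr0_sg // gtr0_norm //; case: ifP => ?; first by rewrite max_l; [ring|lra].
  by case: ifP => ?; [lra | rewrite max_r; [ring|lra]].
- by rewrite sgr0 mul0r; do ?case: ifP => ?; lra.
Qed.

(* [soft_thr tau w] is the proximal point of [tau * `|.|] at [w]. *)
Lemma soft_thr_subgrad tau w x : 0 < tau ->
  tau * `|soft_thr tau w| + (w - soft_thr tau w) * (x - soft_thr tau w) <= tau * `|x|.
Proof.
move=> tau_gt0; have x_le := ler_norm x; have Nx_le : - x <= `|x| by rewrite -normrN ler_norm.
rewrite soft_thrE //; case: ifP => ?; first by rewrite gtr0_norm; [nra | lra].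
by case: ifP => ?; [rewrite ltr0_norm; [nra | lra] | rewrite normr0; nra].
Qed.

Lemma clampE c w : 0 <= c ->
  clamp c w = if w < - c then - c else if c < w then c else w.
Proof.
move=> c_ge0; rewrite /clamp; case: ifP => ?; first by rewrite max_r ?min_l //; lra.
by rewrite max_l; [case: ifP => ?; [rewrite min_r | rewrite min_l] | ]; lra.
Qed.

Lemma norm_clamp_le c w : 0 <= c -> `|clamp c w| <= c.
Proof. by move=> c_ge0; rewrite clampE // ler_norml; do ?case: ifP => ?; lra. Qed.

Lemma clamp_proj c w x : 0 <= c -> `|x| <= c -> (x - clamp c w) * (w - clamp c w) <= 0.
Proof. by move=> c_ge0; rewrite ler_norml clampE // => /andP[]; do ?case: ifP => ?; nra. Qed.

Lemma contraction_sqr (f : R -> R) :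
  (forall a b, b <= a -> 0 <= f a - f b <= a - b) ->
  forall a b, (f a - f b) ^+ 2 <= (a - b) ^+ 2.
Proof.
move=> f_mono a b; have [ba|/ltW ab] := lerP b a.
  by have /andP := f_mono a b ba; nra.
by have /andP := f_mono b a ab; nra.
Qed.

Lemma soft_thr_contraction tau a b : 0 < tau ->
  (soft_thr tau a - soft_thr tau b) ^+ 2 <= (a - b) ^+ 2.
Proof.
move=> tau_gt0; apply: contraction_sqr => {}a {}b ba.
by rewrite !soft_thrE //; do ?case: ifP => ?; apply/andP; split; lra.
Qed.

Lemma clamp_contraction c a b : 0 <= c -> (clamp c a - clamp c b) ^+ 2 <= (a - b) ^+ 2.
Proof.
move=> c_ge0; apply: contraction_sqr => {}a {}b ba.
by rewrite !clampE //; do ?case: ifP => ?; apply/andP; split; lra.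
Qed.

End ScalarProx.

Section DotProduct.
Variables (R : realType) (k : nat).
Implicit Types v w x : 'cV[R]_k.

Definition dot v w : R := \sum_i v i 0 * w i 0.

Lemma dotC v w : dot v w = dot w v.
Proof. by apply: eq_bigr => i _; rewrite mulrC. Qed.

Lemma dotDl v w x : dot (v + w) x = dot v x + dot w x.
Proof. by rewrite /dot -big_split; apply: eq_bigr => i _; rewrite !mxE mulrDl. Qed.

Lemma dotDr v w x : dot x (v + w) = dot x v + dot x w.
Proof. by rewrite dotC dotDl !(dotC x). Qed.

Lemma dotZl (a : R) v w : dot (a *: v) w = a * dot v w.
Proof. by rewrite /dot mulr_sumr; apply: eq_bigr => i _; rewrite !mxE mulrA. Qed.

Lemma dotZr (a : R) v w : dot v (a *: w) = a * dot v w.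
Proof. by rewrite dotC dotZl dotC. Qed.

Lemma dotNl v w : dot (- v) w = - dot v w.
Proof. by rewrite -scaleN1r dotZl mulN1r. Qed.

Lemma dotNr v w : dot v (- w) = - dot v w.
Proof. by rewrite dotC dotNl dotC. Qed.

Lemma dotBl v w x : dot (v - w) x = dot v x - dot w x.
Proof. by rewrite dotDl dotNl. Qed.

Lemma dotBr v w x : dot x (v - w) = dot x v - dot x w.
Proof. by rewrite dotDr dotNr. Qed.

Lemma dot0r v : dot v 0 = 0.
Proof. by rewrite /dot big1 // => i _; rewrite mxE mulr0. Qed.

Lemma dot_ge0 v : 0 <= dot v v.
Proof. by apply: sumr_ge0 => i _; rewrite -expr2 sqr_ge0. Qed.

Lemma sqr_le_dot v i : v i 0 ^+ 2 <= dot v v.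
Proof.
rewrite /dot (bigD1 i) //= -expr2 lerDl.
by apply: sumr_ge0 => j _; rewrite -expr2 sqr_ge0.
Qed.

Lemma dot_eq0 v : (dot v v == 0) = (v == 0).
Proof.
apply/idP/eqP => [|->]; last by rewrite dot0r.
rewrite psumr_eq0 => [/allP v0|i _]; last by rewrite -expr2 sqr_ge0.
apply/matrixP => i j; rewrite (ord1 j) mxE.
by have /implyP/(_ isT) := v0 i (mem_index_enum _); rewrite -expr2 sqrf_eq0 => /eqP.
Qed.

Lemma dot_gt0 v : v != 0 -> 0 < dot v v.
Proof. by rewrite -dot_eq0 lt_def dot_ge0 andbT. Qed.

Lemma dotZZ (a : R) v : dot (a *: v) (a *: v) = a ^+ 2 * dot v v.
Proof. by rewrite dotZl dotZr mulrA expr2. Qed.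

Lemma dotNN v : dot (- v) (- v) = dot v v.
Proof. by rewrite dotNl dotNr opprK. Qed.

Lemma dot_le_sqr v w : 2 * dot v w <= dot v v + dot w w.
Proof. by have := dot_ge0 (v - w); rewrite !(dotBl, dotBr) (dotC w v); lra. Qed.

Lemma dot_sqrD_le v w : dot (v + w) (v + w) <= 2 * dot v v + 2 * dot w w.
Proof. by have := dot_ge0 (v - w); rewrite !(dotDl, dotDr, dotNl, dotNr) (dotC w v); lra. Qed.

Lemma dot_le_entries v (e : R) : (forall i, `|v i 0| <= e) -> dot v v <= k%:R * e ^+ 2.
Proof.
move=> v_le; rewrite mulr_natl -[X in _ *+ X](card_ord k) -sumr_const; apply: ler_sum => i _.
by rewrite -expr2 -real_normK ?num_real // lerXn2r ?nnegrE ?(le_trans _ (v_le i)).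
Qed.

Lemma dot_trmx v w : (v^T *m w) 0 0 = dot v w.
Proof. by rewrite mxE; apply: eq_bigr => i _; rewrite mxE. Qed.

End DotProduct.

Lemma dot_mulmx (R : realType) (m k : nat) (M : 'M[R]_(m, k)) v w :
  dot (M *m v) w = dot v (M^T *m w).
Proof.
rewrite /dot; under eq_bigr do rewrite mxE big_distrl /=.
under [RHS]eq_bigr do rewrite mxE big_distrr /=.
rewrite exchange_big /=; apply: eq_bigr => i _; apply: eq_bigr => j _.
by rewrite mxE; ring.
Qed.

Lemma dot_col_mx (R : realType) (k l : nat) (v v' : 'cV[R]_k) (w w' : 'cV[R]_l) :
  dot (col_mx v w) (col_mx v' w') = dot v v' + dot w w'.
Proof.
rewrite /dot big_split_ord /=; congr (_ + _).
  by apply: eq_bigr => i _; rewrite !col_mxEu.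
by apply: eq_bigr => i _; rewrite !col_mxEd.
Qed.

Section VectorProx.
Variables (R : realType) (k : nat).
Implicit Types v w x : 'cV[R]_k.

Lemma dot_CauchySchwarz v w : dot v w ^+ 2 <= dot v v * dot w w.
Proof.
have [->|w_neq0] := eqVneq w 0; first by rewrite !dot0r expr0n mulr0.
have w_gt0 := dot_gt0 w_neq0.
have := dot_ge0 (dot w w *: v - dot v w *: w).
rewrite !(dotBl, dotBr, dotZl, dotZr) (dotC w v); nra.
Qed.

Lemma mulmx_dot_bound (l : nat) (M : 'M[R]_(l, k)) :
  exists2 L, 0 <= L & forall x, dot (M *m x) (M *m x) <= L * dot x x.
Proof.
exists (\sum_i dot (row i M)^T (row i M)^T) => [|x].
  by apply: sumr_ge0 => i _; exact: dot_ge0.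
rewrite [leLHS]/dot mulr_suml; apply: ler_sum => i _.
have -> : (M *m x) i 0 * (M *m x) i 0 = dot (row i M)^T x ^+ 2.
  by rewrite expr2 /dot mxE; congr (_ * _); apply: eq_bigr => j _; rewrite !mxE.
exact: dot_CauchySchwarz.
Qed.

Lemma norm1_soft_subgrad (eta : R) w x : 0 < eta ->
  norm1 (soft eta^-1 w) + dot (eta *: (w - soft eta^-1 w)) (x - soft eta^-1 w) <= norm1 x.
Proof.
move=> eta_gt0; have etaV_gt0 : 0 < eta^-1 by rewrite invr_gt0.
rewrite /norm1 /dot -big_split; apply: ler_sum => i _ /=.
have := soft_thr_subgrad (w i 0) (x i 0) etaV_gt0.
move/(ler_wpM2l (ltW eta_gt0)); rewrite !mulrDr !mulrA mulfV ?gt_eqF // !mul1r.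
by rewrite /soft_thr !mxE -mulrDr.
Qed.

Lemma clip_proj (c : R) w x : 0 <= c -> (forall i, `|x i 0| <= c) ->
  dot (w - clip c w) (x - clip c w) <= 0.
Proof.
move=> c_ge0 x_le; apply: sumr_le0 => i _; rewrite !mxE mulrC.
exact: (clamp_proj _ c_ge0 (x_le i)).
Qed.

Lemma norm_clip_le (c : R) w i : 0 <= c -> `|clip c w i 0| <= c.
Proof. by move=> c_ge0; rewrite mxE; exact: norm_clamp_le. Qed.

Lemma dot_soft_contraction (tau : R) v w : 0 < tau ->
  dot (soft tau v - soft tau w) (soft tau v - soft tau w) <= dot (v - w) (v - w).
Proof.
by move=> tau_gt0; apply: ler_sum => i _; rewrite !mxE -!expr2 soft_thr_contraction.
Qed.

Lemma dot_clip_contraction (c : R) v w : 0 <= c ->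
  dot (clip c v - clip c w) (clip c v - clip c w) <= dot (v - w) (v - w).
Proof.
by move=> c_ge0; apply: ler_sum => i _; rewrite !mxE -!expr2 clamp_contraction.
Qed.

End VectorProx.

(** * Limits and the largest eigenvalue *)

Section Limits.
Variables (R : realType) (k : nat).

Lemma le0_of_le_mul (r K : R) : 0 <= K -> (forall d, 0 < d -> r <= K * d) -> r <= 0.
Proof.
move=> K_ge0 r_le; apply/ler_addgt0Pr => e e_gt0; rewrite add0r.
have K1_gt0 : 0 < K + 1 by lra.
apply: le_trans (r_le (e / (K + 1)) (divr_gt0 e_gt0 K1_gt0)) _.
by rewrite mulrA ler_pdivrMr //; nra.
Qed.

Lemma norm_entry_le_mx_norm (m n : nat) (M : 'M[R]_(m, n)) i j : `|M i j| <= `|M|.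
Proof. by rewrite [leRHS]/Num.norm /= mx_normrE; exact: le_bigmax _ _ (i, j). Qed.

Lemma cvg_dot_dist (w : nat -> 'cV[R]_k) l :
  (forall d, 0 < d -> exists T, forall t, (T <= t)%N -> dot (w t - l) (w t - l) < d) ->
  w t @[t --> \oo] --> l.
Proof.
move=> w_near; apply/cvgrPdist_lt => e e_gt0.
have [T wT] := w_near _ (exprn_gt0 2 e_gt0).
exists T => // t /wT dot_lt; rewrite /Num.norm /= mx_normrE.
apply/bigmax_ltP; split => // -[i j] _ /=.
rewrite (ord1 j) -opprB mxE normrN.
have := sqr_le_dot (w t - l) i; have := normr_ge0 ((w t - l) i 0).
by rewrite -real_normK ?num_real //; nra.
Qed.

Lemma rV_bounded_cluster (x : nat -> 'rV[R]_k) (r : R) :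
  (forall t i, `|x t ord0 i| <= r) ->
  exists l : 'rV[R]_k, forall e, 0 < e -> forall T,
    exists2 t, (T <= t)%N & forall i, `|x t ord0 i - l ord0 i| < e.
Proof.
move=> x_le.
pose B := [set v : 'rV[R]_k | forall i, `[(- r), r]%classic (v ord0 i)].
have B_compact : compact B.
  exact: (@rV_compact _ _ (fun=> `[(- r), r]%classic) (fun=> @segment_compact R _ _)).
have x_B : (x @ \oo) B by exists 0%N => // t _ i; rewrite /= in_itv /= -ler_norml.
have [l [_ l_cluster]] := B_compact _ _ x_B.
exists l => e e_gt0 T.
have x_tail : (x @ \oo) [set v | exists2 t, (T <= t)%N & v = x t].
  by exists T => // t Tt; exists t.
have [v [[t Tt ->] xt_near]] := l_cluster _ _ x_tail (nbhsx_ballx l e e_gt0).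
exists t => // i; rewrite distrC.
move: xt_near; rewrite -ball_normE /ball_ /=.
by apply: le_lt_trans; have := norm_entry_le_mx_norm (l - x t) ord0 i; rewrite !mxE.
Qed.

Lemma bounded_cluster (w : nat -> 'cV[R]_k) (M : R) :
  (forall t, dot (w t) (w t) <= M) ->
  exists l, forall d, 0 < d -> forall T,
    exists2 t, (T <= t)%N & dot (w t - l) (w t - l) < d.
Proof.
move=> w_le.
have [|l l_cluster] := @rV_bounded_cluster (fun t => (w t)^T) (M + 1).
  move=> t i; rewrite mxE; have := sqr_le_dot (w t) i; have := w_le t.
  have := normr_ge0 (w t i 0); rewrite -real_normK ?num_real //; nra.
exists l^T => d d_gt0 T.
have k1_gt0 : 0 < k%:R + 1 :> R by rewrite ltr_wpDl.
have e_gt0 : 0 < d / (k%:R + 1) by rewrite divr_gt0.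
have [t Tt wt_near] := l_cluster (Num.sqrt (d / (k%:R + 1))) (etrans (sqrtr_gt0 _) e_gt0) T.
exists t => //.
apply: le_lt_trans (dot_le_entries (e := Num.sqrt (d / (k%:R + 1))) _) _.
  by move=> i; have := wt_near i; rewrite !mxE => /ltW.
rewrite sqr_sqrtr ?ltW // mulrA ltr_pdivrMr //; lra.
Qed.

End Limits.

Lemma quad_form_continuous (R : realType) (p : nat) (M : 'M[R]_p) :
  continuous (fun x : 'rV[R]_p => dot x^T (M *m x^T)).
Proof.
have entry_cont i : continuous (fun x : 'rV[R]_p => x^T i 0).
  by move=> x; under eq_fun do rewrite mxE; exact: coord_continuous.
have Mx_cont i : continuous (fun x : 'rV[R]_p => (M *m x^T) i 0).
  have -> : (fun x : 'rV[R]_p => (M *m x^T) i 0) = (fun x => \sum_j M i j * x^T j 0).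
    by apply/funext => x; rewrite mxE.
  apply: (continuous_big add_continuous) => j _ x.
  by apply: continuousM; [exact: cst_continuous | exact: entry_cont].
rewrite /dot; apply: (continuous_big add_continuous) => i _ x.
by apply: continuousM; [exact: entry_cont | exact: Mx_cont].
Qed.

Section QuadraticForm.
Variables (R : realType) (p : nat) (M : 'M[R]_p).
Hypothesis M_sym : M^T = M.

Lemma quad_formZ (a : R) v : dot (a *: v) (M *m (a *: v)) = a ^+ 2 * dot v (M *m v).
Proof. by rewrite -scalemxAr dotZl dotZr mulrA -expr2. Qed.

Lemma quad_formD v w :
  dot (v + w) (M *m (v + w)) = dot v (M *m v) + 2 * dot (M *m v) w + dot w (M *m w).
Proof.
rewrite mulmxDr !(dotDl, dotDr) (dotC v (M *m w)) dot_mulmx M_sym (dotC w (M *m v)).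
ring.
Qed.

Lemma psd_null_mulmx v : (forall x, 0 <= dot x (M *m x)) ->
  dot v (M *m v) = 0 -> M *m v = 0.
Proof.
move=> M_psd Mv0; apply/eqP; rewrite -dot_eq0 eq_le dot_ge0 andbT.
apply: (@le0_of_le_mul _ _ (dot (M *m v) (M *m (M *m v)) / 2)) => [|t t_gt0].
  by rewrite divr_ge0 ?M_psd.
have := M_psd (v + (- t) *: (M *m v)).
rewrite quad_formD quad_formZ Mv0 dotZr sqrrN; nra.
Qed.

Lemma unit_quad_form_le (m : R) : (forall u, dot u u = 1 -> dot u (M *m u) <= m) ->
  forall v, dot v (M *m v) <= m * dot v v.
Proof.
move=> M_le v; have [->|v_neq0] := eqVneq v 0; first by rewrite mulmx0 !dot0r mulr0.
have v_gt0 := dot_gt0 v_neq0.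
have := M_le ((Num.sqrt (dot v v))^-1 *: v).
rewrite quad_formZ dotZZ exprVn sqr_sqrtr ?dot_ge0 // mulVf ?gt_eqF // => /(_ erefl).
by rewrite ler_pdivrMl // mulrC.
Qed.

Lemma quad_form_max_on_sphere : (exists v : 'cV[R]_p, v != 0) ->
  exists2 c : 'cV[R]_p, dot c c = 1 & forall v, dot v (M *m v) <= dot c (M *m c) * dot v v.
Proof.
move=> [v0 v0_neq0].
pose S := [set x : 'rV[R]_p | dot x^T (1%:M *m x^T) = 1].
have S_compact : compact S.
  apply: (@subclosed_compact _ _
    [set x : 'rV[R]_p | forall i, `[(-1 : R), 1]%classic (x ord0 i)]).
  - exact: (continuous_closedP _).1 (@quad_form_continuous R p 1%:M) _ (@closed_eq R 1).
  - exact: (@rV_compact _ _ (fun=> `[(-1 : R), 1]%classic) (fun=> @segment_compact R _ _)).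
  - move=> x; rewrite /S /= mul1mx => x_unit i; rewrite in_itv /= -ler_norml.
    have := sqr_le_dot x^T i; rewrite x_unit mxE -real_normK ?num_real // => x_le.
    by rewrite -(expr_le1 (n := 2)).
have S_nonempty : S !=set0.
  exists ((Num.sqrt (dot v0 v0))^-1 *: v0)^T; rewrite /S /= trmxK mul1mx dotZZ.
  by rewrite exprVn sqr_sqrtr ?dot_ge0 // mulVf // gt_eqF // dot_gt0.
have [c c_S c_max] :=
  compact_EVT_max S_nonempty S_compact (continuous_subspaceT (@quad_form_continuous _ _ M)).
exists c^T; first by move: c_S; rewrite inE /S /= mul1mx.
apply: unit_quad_form_le => u u_unit.
by have := c_max u^T; rewrite trmxK; apply; rewrite inE /S /= trmxK mul1mx.
Qed.

End QuadraticForm.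

Section LambdaMax.
Variables (R : realType) (p : nat) (M : 'M[R]_p).
Hypothesis M_sym : M^T = M.

Lemma quad_form_max_eigen c : dot c c = 1 ->
  (forall v, dot v (M *m v) <= dot c (M *m c) * dot v v) ->
  M *m c = dot c (M *m c) *: c.
Proof.
move=> c_unit c_max; set m := dot c (M *m c).
have shift_sym : (m%:M - M)^T = m%:M - M by rewrite linearB /= tr_scalar_mx M_sym.
have shift_psd x : 0 <= dot x ((m%:M - M) *m x).
  by rewrite mulmxBl mul_scalar_mx dotBr dotZr subr_ge0 c_max.
apply/eqP; rewrite eq_sym -subr_eq0 -mul_scalar_mx -mulmxBl.
apply/eqP/(psd_null_mulmx shift_sym shift_psd).
by rewrite mulmxBl mul_scalar_mx dotBr dotZr c_unit mulr1 subrr.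
Qed.

Lemma quad_form_le_lambda_max l : is_lambda_max M l ->
  forall v, dot v (M *m v) <= l * dot v v.
Proof.
case=> /eigenvalueP[r _ r_neq0] l_max.
have [|c c_unit c_max] := quad_form_max_on_sphere M.
  by exists r^T; rewrite trmx_eq0.
suff m_le : dot c (M *m c) <= l.
  by move=> v; apply: le_trans (c_max v) (ler_wpM2r (dot_ge0 v) m_le).
apply/l_max/eigenvalueP; exists c^T; last by rewrite trmx_eq0 -dot_eq0 c_unit oner_neq0.
by rewrite -[LHS]trmxK trmx_mul trmxK M_sym {1}(quad_form_max_eigen c_unit c_max) linearZ.
Qed.

End LambdaMax.

Lemma lambda_max_gram (R : realType) (m p : nat) (A : 'M[R]_(m, p)) (mu l : R) :
  0 < mu -> is_lambda_max (mu *: (A^T *m A)) l ->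
  0 <= l /\ forall v, mu * dot (A *m v) (A *m v) <= l * dot v v.
Proof.
move=> mu_gt0 l_max.
have M_sym : (mu *: (A^T *m A))^T = mu *: (A^T *m A) by rewrite linearZ /= trmx_mul trmxK.
have A_le v : mu * dot (A *m v) (A *m v) <= l * dot v v.
  by rewrite dot_mulmx mulmxA -dotZr scalemxAl quad_form_le_lambda_max.
split => //; case: l_max => /eigenvalueP[r _ r_neq0] _.
have r_gt0 : 0 < dot r^T r^T by rewrite dot_gt0 // trmx_eq0.
rewrite -(pmulr_lge0 _ r_gt0); apply: le_trans (A_le r^T).
by rewrite mulr_ge0 ?dot_ge0 // ltW.
Qed.

(** * Convergence of linearized ADMM *)

Lemma subr_telescope3 (V : zmodType) (x y z w : V) : x - w = (x - y) + (y - z) + (z - w).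
Proof. by rewrite !addrA !subrK. Qed.

Section LinearizedADMM.
Variables (R : realType) (m p : nat) (A : 'M[R]_(m, p)) (c : 'cV[R]_m) (c0 mu eta : R).
Hypotheses (c0_ge0 : 0 <= c0) (mu_gt0 : 0 < mu) (eta_ge1 : 1 <= eta).
Hypothesis A_bound : forall v, mu * dot (A *m v) (A *m v) <= (eta - 1) * dot v v.

Local Notation state := ('cV[R]_p * 'cV[R]_m * 'cV[R]_m)%type.

Let eta_gt0 : 0 < eta. Proof. exact: lt_le_trans ltr01 eta_ge1. Qed.

Definition res (b : 'cV[R]_p) (z : 'cV[R]_m) := A *m b - z - c.

Definition in_box (z : 'cV[R]_m) := forall i, `|z i 0| <= c0.

Definition kkt (g : state) : Prop :=
  let: (b, z, u) := g in
  [/\ forall x, norm1 b + dot (A^T *m u) (x - b) <= norm1 x, in_box z,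
      forall x, in_box x -> 0 <= dot u (x - z) & res b z = 0].

Definition step_b (g : state) := soft eta^-1 (g.1.1 + eta^-1 *: (A^T *m g.2)).
Definition step_z (g : state) := clip c0 (g.1.2 - mu^-1 *: g.2).
Definition step_u (g : state) :=
  g.2 - (mu / 2) *: (2 *: res (step_b g) (step_z g) - res g.1.1 g.1.2).
Definition ladmm_step (g : state) : state := (step_b g, step_z g, step_u g).

(* The optimality conditions of the three substeps producing [g'] from [g]. *)
Definition step_vi (g g' : state) : Prop :=
  let: (b, z, u) := g in let: (b', z', u') := g' in
  [/\ forall x, norm1 b' + dot (eta *: (b - b') + A^T *m u) (x - b') <= norm1 x,
      in_box z', forall x, in_box x -> dot (mu *: (z - z') - u) (x - z') <= 0 &
      u' = u - (mu / 2) *: (2 *: res b' z' - res b z)].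

Lemma ladmm_step_vi g : step_vi g (ladmm_step g).
Proof.
case: g => [[b z] u]; rewrite /ladmm_step /step_b /step_z /=; split => //.
- move=> x; set w := b + eta^-1 *: _.
  have <- : eta *: (w - soft eta^-1 w) = eta *: (b - soft eta^-1 w) + A^T *m u.
    by rewrite /w addrAC scalerDr scalerA mulfV ?gt_eqF // scale1r.
  exact: norm1_soft_subgrad.
- by move=> i; exact: norm_clip_le.
- move=> x x_box; set w := z - mu^-1 *: u.
  have -> : mu *: (z - clip c0 w) - u = mu *: (w - clip c0 w).
    by rewrite /w addrAC [RHS]scalerDr scalerN scalerA mulfV ?gt_eqF // scale1r.
  by rewrite dotZl pmulr_rle0 // clip_proj.
Qed.

Lemma kkt_step_vi g : kkt g <-> step_vi g g.
Proof.
case: g => [[b z] u] /=; rewrite !subrr !scaler0 add0r sub0r.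
have u_fixed : u = u - (mu / 2) *: (2 *: res b z - res b z) <-> res b z = 0.
  rewrite (_ : 2 *: res b z - res b z = res b z); last by rewrite scaler_nat mulr2n addrK.
  split => [/eqP|->]; last by rewrite scaler0 subr0.
  rewrite -subr_eq0 opprB addrC subrK scaler_eq0 mulf_eq0 invr_eq0 pnatr_eq0 orbF.
  by rewrite gt_eqF //= => /eqP.
have z_opp x : (dot (- u) (x - z) <= 0) = (0 <= dot u (x - z)) by rewrite dotNl oppr_le0.
split=> -[b_opt z_box z_opt res0]; split => //.
- by move=> x /z_opt; rewrite z_opp.
- exact/u_fixed.
- by move=> x /z_opt; rewrite z_opp.
- exact/u_fixed.
Qed.

Definition Hform (g g' : state) : R :=
  let: (b, z, u) := g in let: (b', z', u') := g' in
  eta * dot b b' + mu * dot z z' + 2 / mu * dot u u'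
  + dot (A *m b) u' + dot (A *m b') u - dot z u' - dot z' u.

Arguments Hform : simpl never.

Definition Hquad (g : state) := Hform g g.

Definition sqn (g : state) : R := let: (b, z, u) := g in dot b b + dot z z + dot u u.

Lemma HquadD g g' : Hquad (g + g') = Hquad g + 2 * Hform g g' + Hquad g'.
Proof.
case: g g' => [[b z] u] [[b' z'] u']; rewrite /Hquad /Hform /= !mulmxDr !(dotDl, dotDr).
rewrite (dotC b' b) (dotC z' z) (dotC u' u) (dotC (A *m b) u') (dotC (A *m b') u).
by rewrite (dotC z' u) (dotC z u'); ring.
Qed.

Lemma Hform_ge0_of_split db dz du Db Dz Du :
  0 <= eta * dot Db db + dot (A *m db) (Du + du) ->
  0 <= mu * dot Dz dz - dot (Du + du) dz ->
  2 / mu * dot Du du + dot (A *m Db) du - dot Dz du = dot (A *m db) du - dot dz du ->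
  0 <= Hform (db, dz, du) (Db, Dz, Du).
Proof.
rewrite /Hform dotDr dotDl (dotC Db) (dotC Dz) (dotC Du dz) (dotC du dz) (dotC Du du); lra.
Qed.

(* The [H]-monotonicity of the iteration: add the variational inequalities at
   [g1] and [g1'] and eliminate the multipliers with the [u]-updates. *)
Lemma step_vi_Hform g0 g1 g0' g1' : step_vi g0 g1 -> step_vi g0' g1' ->
  0 <= Hform (g1 - g1') ((g0 - g1) - (g0' - g1')).
Proof.
case: g0 g1 g0' g1' => [[b0 z0] u0] [[b1 z1] u1] [[b0' z0'] u0'] [[b1' z1'] u1'] /=.
case=> b_vi z_box z_vi u_def [b_vi' z_box' z_vi' u_def'].
have Du : u0 - u0' = (u0 - u1 - (u0' - u1')) + (u1 - u1').
  by apply/matrixP => i j; rewrite !mxE; ring.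
apply: Hform_ge0_of_split; rewrite -?Du.
- have := b_vi b1'; have := b_vi' b1; rewrite -(opprB b1 b1') dotNr => vi' vi.
  have b_sum : 0 <= dot ((eta *: (b0 - b1) + A^T *m u0) - (eta *: (b0' - b1') + A^T *m u0'))
                        (b1 - b1') by rewrite dotBl; lra.
  rewrite opprD addrACA -scalerBr -mulmxBr dotDl dotZl dot_mulmx trmxK in b_sum.
  by rewrite (dotC (A *m _)).
- have := z_vi z1' z_box'; have := z_vi' z1 z_box; rewrite -(opprB z1 z1') dotNr => vi' vi.
  have z_sum : 0 <= dot (mu *: (z0 - z1 - (z0' - z1')) - (u0 - u0')) (z1 - z1').
    have -> : mu *: (z0 - z1 - (z0' - z1')) - (u0 - u0') =
              (mu *: (z0 - z1) - u0) - (mu *: (z0' - z1') - u0').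
      by apply/matrixP => i j; rewrite !mxE; ring.
    by rewrite dotBl; lra.
  by rewrite dotBl dotZl in z_sum.
- have -> : u0 - u1 - (u0' - u1') = (mu / 2) *: (A *m (b1 - b1') - (z1 - z1')
      - (A *m (b0 - b1 - (b0' - b1')) - (z0 - z1 - (z0' - z1')))).
    rewrite u_def u_def' /res !(mulmxDr, mulmxBr, mulmxN).
    by apply/matrixP => i j; rewrite !mxE; ring.
  rewrite dotZl mulrA (_ : 2 / mu * (mu / 2) = 1); last by field; rewrite gt_eqF.
  by rewrite mul1r !dotBl; ring.
Qed.

Lemma sqn_ge0 g : 0 <= sqn g.
Proof. by case: g => [[b z] u]; rewrite /sqn !addr_ge0 ?dot_ge0. Qed.

Lemma sqn_eq0 g : (sqn g == 0) = (g == 0).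
Proof.
case: g => [[b z] u]; rewrite /sqn paddr_eq0 ?addr_ge0 ?dot_ge0 // paddr_eq0 ?dot_ge0 //.
by rewrite !dot_eq0.
Qed.

Lemma sqnN g : sqn (- g) = sqn g.
Proof. by case: g => [[b z] u]; rewrite /sqn /= !dotNN. Qed.

Lemma sqnBC g g' : sqn (g - g') = sqn (g' - g).
Proof. by rewrite -opprB sqnN. Qed.

Lemma sqnD_le g g' : sqn (g + g') <= 2 * sqn g + 2 * sqn g'.
Proof.
case: g g' => [[b z] u] [[b' z'] u']; rewrite /sqn /=.
have := dot_sqrD_le b b'; have := dot_sqrD_le z z'; have := dot_sqrD_le u u'; lra.
Qed.

Lemma dot_le_sqn g :
  [/\ dot g.1.1 g.1.1 <= sqn g, dot g.1.2 g.1.2 <= sqn g & dot g.2 g.2 <= sqn g].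
Proof.
case: g => [[b z] u]; rewrite /sqn /=.
by have := dot_ge0 b; have := dot_ge0 z; have := dot_ge0 u; split; lra.
Qed.


Lemma A_dot_le v : dot (A *m v) (A *m v) <= (eta - 1) / mu * dot v v.
Proof. by rewrite mulrAC ler_pdivlMr // mulrC A_bound. Qed.

(* Completing the squares,
   [Hquad (b, z, u) = (eta |b|^2 - mu |Ab|^2) + mu |z - u / mu|^2 + |u + mu Ab|^2 / mu],
   and the first term dominates [|b|^2] by [A_bound]. *)
Lemma Hquad_coercive : exists2 C, 0 < C & forall g, sqn g <= C * Hquad g.
Proof.
have muV_gt0 : 0 < mu^-1 by rewrite invr_gt0.
have muV : mu * mu^-1 = 1 by rewrite mulfV ?gt_eqF.
exists (1 + 2 * mu * eta + (2 + 4 * eta) * mu^-1) => [|[[b z] u]].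
  have := eta_gt0 => eta_gt0'.
  have : 0 < (2 + 4 * eta) * mu^-1 by apply: mulr_gt0 => //; lra.
  by have := mulr_gt0 mu_gt0 eta_gt0; lra.
set Q := Hquad _; set S := dot (z - mu^-1 *: u) (z - mu^-1 *: u).
set P := dot (u + mu *: (A *m b)) (u + mu *: (A *m b)).
have Q_squares : Q = (eta * dot b b - mu * dot (A *m b) (A *m b)) + mu * S + mu^-1 * P.
  rewrite /Q /Hquad /Hform /S /P !(dotDl, dotDr, dotNl, dotNr, dotZl, dotZr).
  by rewrite (dotC u z) (dotC u (A *m b)); field; rewrite gt_eqF.
have := A_bound b; have := dot_ge0 b; have := dot_ge0 (A *m b).
have S_ge0 : 0 <= S := dot_ge0 _; have P_ge0 : 0 <= P := dot_ge0 _.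
move=> Ab_ge0 b_ge0 Ab_le; have eta1_ge0 : 0 <= eta - 1 by move: eta_ge1; lra.
have := mulr_ge0 (ltW mu_gt0) S_ge0; have := mulr_ge0 (ltW muV_gt0) P_ge0 => PV_ge0 SV_ge0.
have b_le : dot b b <= Q by lra.
have P_le : P <= mu * Q.
  have /(ler_wpM2l (ltW mu_gt0)) : mu^-1 * P <= Q by lra.
  by rewrite mulrA muV mul1r.
have S_le : S <= mu^-1 * Q.
  have /(ler_wpM2l (ltW muV_gt0)) : mu * S <= Q by lra.
  by rewrite mulrA mulVf ?gt_eqF // mul1r.
have u_le : dot u u <= 2 * mu * eta * Q.
  have := dot_sqrD_le (u + mu *: (A *m b)) (- (mu *: (A *m b))).
  rewrite addrK dotNN dotZZ -/P.
  have := ler_wpM2l (ltW mu_gt0) Ab_le.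
  have := ler_wpM2l (mulr_ge0 (ltW mu_gt0) eta1_ge0) b_le.
  nra.
have uV_le : mu^-1 ^+ 2 * dot u u <= 2 * eta * mu^-1 * Q.
  have -> : 2 * eta * mu^-1 * Q = mu^-1 ^+ 2 * (2 * mu * eta * Q) by field; rewrite gt_eqF.
  by rewrite ler_wpM2l ?sqr_ge0.
have z_le : dot z z <= (2 + 4 * eta) * mu^-1 * Q.
  have := dot_sqrD_le (z - mu^-1 *: u) (mu^-1 *: u); rewrite subrK dotZZ -/S; lra.
rewrite /sqn; lra.
Qed.

Lemma Hquad_ge0 g : 0 <= Hquad g.
Proof.
have [C C_gt0 sqn_le] := Hquad_coercive.
by rewrite -(pmulr_rge0 (Hquad g) C_gt0); exact: le_trans (sqn_ge0 g) (sqn_le g).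
Qed.

Lemma Hquad_bounded : exists2 C, 0 <= C & forall g, Hquad g <= C * sqn g.
Proof.
have L_ge0 : 0 <= (eta - 1) / mu by apply: divr_ge0; [rewrite subr_ge0 | exact: ltW].
have k_ge0 : 0 <= 2 / mu by apply: divr_ge0 => //; exact: ltW.
exists (eta + (eta - 1) / mu + mu + 2 / mu + 2) => [|[[b z] u]].
  by move: eta_ge1 mu_gt0; lra.
have := A_dot_le b; have := dot_le_sqr (A *m b) u; have := dot_le_sqr (- z) u.
rewrite dotNl dotNN /Hquad /Hform /sqn.
have := dot_ge0 b; have := dot_ge0 z; have := dot_ge0 u; move: eta_ge1 mu_gt0; nra.
Qed.

Lemma Hquad_fejer g s : kkt s ->
  Hquad (ladmm_step g - s) + Hquad (g - ladmm_step g) <= Hquad (g - s).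
Proof.
move=> /kkt_step_vi s_vi; have := step_vi_Hform (ladmm_step_vi g) s_vi.
have -> : g - s = (ladmm_step g - s) + (g - ladmm_step g) by rewrite [RHS]addrC subrKA.
rewrite subrr subr0 (HquadD (ladmm_step g - s)); lra.
Qed.

Lemma Hquad_step_nonincr g :
  Hquad (ladmm_step g - ladmm_step (ladmm_step g)) <= Hquad (g - ladmm_step g).
Proof.
set g' := ladmm_step g; set D := g - g' - (g' - ladmm_step g').
have := step_vi_Hform (ladmm_step_vi g) (ladmm_step_vi g'); rewrite -/g' -/D => D_ge0.
rewrite -[g - g'](subrK (g' - ladmm_step g')) -/D [D + _]addrC (HquadD (g' - _)).
by have := Hquad_ge0 D; lra.
Qed.

Definition lipschitz_state k (f : state -> 'cV[R]_k) :=
  exists2 K, 0 <= K & forall g g', dot (f g - f g') (f g - f g') <= K * sqn (g - g').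

Section LipschitzClosure.
Variable k : nat.
Implicit Types f : state -> 'cV[R]_k.

Lemma lipschitz_stateD f f' : lipschitz_state f -> lipschitz_state f' ->
  lipschitz_state (fun g => f g + f' g).
Proof.
move=> [K K_ge0 f_le] [K' K'_ge0 f'_le]; exists (2 * K + 2 * K') => [|g g']; first lra.
rewrite opprD addrACA; apply: le_trans (dot_sqrD_le _ _) _.
by have := f_le g g'; have := f'_le g g'; lra.
Qed.

Lemma lipschitz_stateN f : lipschitz_state f -> lipschitz_state (fun g => - f g).
Proof. by move=> [K K_ge0 f_le]; exists K => // g g'; rewrite -opprD dotNN. Qed.

Lemma lipschitz_stateB f f' : lipschitz_state f -> lipschitz_state f' ->
  lipschitz_state (fun g => f g - f' g).
Proof. by move=> f_lip /lipschitz_stateN; exact: lipschitz_stateD. Qed.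

Lemma lipschitz_stateZ (a : R) f : lipschitz_state f -> lipschitz_state (fun g => a *: f g).
Proof.
move=> [K K_ge0 f_le]; exists (a ^+ 2 * K) => [|g g']; first by rewrite mulr_ge0 ?sqr_ge0.
by rewrite -scalerBr dotZZ -[leRHS]mulrA; apply: ler_wpM2l; [exact: sqr_ge0 | exact: f_le].
Qed.

Lemma lipschitz_state_cst (v : 'cV[R]_k) : lipschitz_state (fun=> v).
Proof. by exists 0 => // g g'; rewrite subrr dot0r mul0r. Qed.

Lemma lipschitz_state_mulmx l (M : 'M[R]_(k, l)) (f : state -> 'cV[R]_l) :
  lipschitz_state f -> lipschitz_state (fun g => M *m f g).
Proof.
move=> [K K_ge0 f_le]; have [L L_ge0 M_le] := mulmx_dot_bound M.
exists (L * K) => [|g g']; first exact: mulr_ge0.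
by rewrite -mulmxBr -[leRHS]mulrA; apply: le_trans (M_le _) _; exact: ler_wpM2l.
Qed.

Lemma lipschitz_state_soft (tau : R) f : 0 < tau ->
  lipschitz_state f -> lipschitz_state (fun g => soft tau (f g)).
Proof.
move=> tau_gt0 [K K_ge0 f_le]; exists K => // g g'.
exact: le_trans (dot_soft_contraction _ _ tau_gt0) _.
Qed.

Lemma lipschitz_state_clip f : lipschitz_state f -> lipschitz_state (fun g => clip c0 (f g)).
Proof.
move=> [K K_ge0 f_le]; exists K => // g g'.
exact: le_trans (dot_clip_contraction _ _ c0_ge0) _.
Qed.

End LipschitzClosure.

Lemma lipschitz_state_b : lipschitz_state (fun g : state => g.1.1).
Proof. by exists 1 => // g g'; rewrite mul1r; case: (dot_le_sqn (g - g')). Qed.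

Lemma lipschitz_state_z : lipschitz_state (fun g : state => g.1.2).
Proof. by exists 1 => // g g'; rewrite mul1r; case: (dot_le_sqn (g - g')). Qed.

Lemma lipschitz_state_u : lipschitz_state (fun g : state => g.2).
Proof. by exists 1 => // g g'; rewrite mul1r; case: (dot_le_sqn (g - g')). Qed.

Lemma lipschitz_state_res (f : state -> 'cV[R]_p) (f' : state -> 'cV[R]_m) :
  lipschitz_state f -> lipschitz_state f' -> lipschitz_state (fun g => res (f g) (f' g)).
Proof.
move=> f_lip f'_lip; apply: lipschitz_stateB (lipschitz_state_cst c).
exact: lipschitz_stateB (lipschitz_state_mulmx A f_lip) f'_lip.
Qed.

Lemma ladmm_step_lipschitz :
  exists2 K, 0 <= K & forall g g', sqn (ladmm_step g - ladmm_step g') <= K * sqn (g - g').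
Proof.
have etaV_gt0 : 0 < eta^-1 by rewrite invr_gt0.
have lip_b : lipschitz_state step_b.
  apply: lipschitz_state_soft etaV_gt0 _; apply: lipschitz_stateD lipschitz_state_b _.
  exact: lipschitz_stateZ _ (lipschitz_state_mulmx _ lipschitz_state_u).
have lip_z : lipschitz_state step_z.
  apply: lipschitz_state_clip.
  exact: lipschitz_stateB lipschitz_state_z (lipschitz_stateZ _ lipschitz_state_u).
have lip_u : lipschitz_state step_u.
  apply: lipschitz_stateB lipschitz_state_u (lipschitz_stateZ _ _).
  apply: lipschitz_stateB (lipschitz_stateZ _ (lipschitz_state_res lip_b lip_z)) _.
  exact: lipschitz_state_res lipschitz_state_b lipschitz_state_z.
case: lip_b lip_z lip_u => [Kb Kb_ge0 b_le] [Kz Kz_ge0 z_le] [Ku Ku_ge0 u_le].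
exists (Kb + Kz + Ku) => [|g g']; first lra.
by move: (b_le g g') (z_le g g') (u_le g g'); rewrite /sqn /ladmm_step /= !mulrDl; lra.
Qed.


Section Trajectory.
Variable g : nat -> state.
Hypothesis g_step : forall t, g t.+1 = ladmm_step (g t).

Lemma Hquad_dist_nonincr s : kkt s -> nonincreasing_seq (fun t => Hquad (g t - s)).
Proof.
move=> s_kkt; apply/nonincreasing_seqP => t; rewrite g_step.
by have := Hquad_fejer (g t) s_kkt; have := Hquad_ge0 (g t - ladmm_step (g t)); lra.
Qed.

Lemma Hquad_step_rate s T : kkt s ->
  T.+1%:R * Hquad (g T - g T.+1) <= Hquad (g 0 - s).
Proof.
move=> s_kkt.
have steps_nonincr : nonincreasing_seq (fun t => Hquad (g t - g t.+1)).
  by apply/nonincreasing_seqP => t; rewrite !g_step; exact: Hquad_step_nonincr.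
suff rate : T.+1%:R * Hquad (g T - g T.+1) + Hquad (g T.+1 - s) <= Hquad (g 0 - s).
  by have := Hquad_ge0 (g T.+1 - s); lra.
elim: T => [|T IH].
  by rewrite mul1r; have := Hquad_fejer (g 0) s_kkt; rewrite -g_step; lra.
have := Hquad_fejer (g T.+1) s_kkt; rewrite -g_step [T.+2%:R]mulrS mulrDl mul1r.
move=> fejer; apply: le_trans IH.
by have := ler_wpM2l (ler0n _ T.+1) (steps_nonincr _ _ (leqnSn T)); lra.
Qed.

Lemma steps_vanish s : kkt s -> forall d, 0 < d ->
  exists T, forall t, (T <= t)%N -> sqn (g t - g t.+1) <= d.
Proof.
move=> s_kkt d d_gt0; have [C C_gt0 sqn_le] := Hquad_coercive.
exists (Num.truncn (C * Hquad (g 0 - s) / d)) => t; rewrite truncn_le_nat ltr_pdivrMr //.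
have := Hquad_step_rate t s_kkt; have := Hquad_ge0 (g t - g t.+1).
have := sqn_le (g t - g t.+1); have : 0 < t.+1%:R :> R by [].
nra.
Qed.

Lemma cluster_fixed l :
  (forall d, 0 < d -> exists t, sqn (g t - l) <= d /\ sqn (g t - g t.+1) <= d) ->
  ladmm_step l = l.
Proof.
move=> l_near; have [K K_ge0 step_lip] := ladmm_step_lipschitz.
apply/eqP; rewrite -subr_eq0 -sqn_eq0 eq_le sqn_ge0 andbT.
apply: (@le0_of_le_mul _ _ (4 * K + 6)) => [|d /l_near[t [gl_le gg_le]]]; first lra.
rewrite (subr_telescope3 _ (g t.+1) (g t)).
have := sqnD_le (ladmm_step l - g t.+1 + (g t.+1 - g t)) (g t - l).
have := sqnD_le (ladmm_step l - g t.+1) (g t.+1 - g t).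
have : sqn (ladmm_step l - g t.+1) <= K * d.
  rewrite g_step; apply: le_trans (step_lip l (g t)) _.
  by apply: ler_wpM2l => //; rewrite sqnBC.
by rewrite (sqnBC (g t.+1)); lra.
Qed.

Lemma trajectory_cluster s : kkt s ->
  exists l, forall d, 0 < d -> forall T, exists2 t, (T <= t)%N & sqn (g t - l) < d.
Proof.
move=> s_kkt; have [C C_gt0 sqn_le] := Hquad_coercive.
pose vec (h : state) := col_mx (col_mx h.1.1 h.1.2) h.2.
have vec_sqn h : dot (vec h) (vec h) = sqn h by case: h => [[b z] u]; rewrite /vec !dot_col_mx.
have [|l l_cluster] :=
  bounded_cluster (w := vec \o g) (M := 2 * (C * Hquad (g 0 - s)) + 2 * sqn s).
  move=> t; rewrite /= vec_sqn -[g t](subrK s); apply: le_trans (sqnD_le _ _) _.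
  have := ler_wpM2l (ltW C_gt0) (Hquad_dist_nonincr s_kkt (leq0n t)).
  by have := sqn_le (g t - s); lra.
have [lb [lz [lu l_def]]] : exists lb lz lu, l = col_mx (col_mx lb lz) lu.
  by exists (usubmx (usubmx l)), (dsubmx (usubmx l)), (dsubmx l); rewrite !vsubmxK.
exists (lb, lz, lu) => d /l_cluster l_near T; have [t Tt lt_d] := l_near T.
by exists t => //; move: lt_d; rewrite -vec_sqn l_def /= !opp_col_mx !add_col_mx.
Qed.

(* Fejer monotonicity with respect to the cluster point itself upgrades
   the cluster point to a limit. *)
Lemma cvg_to_kkt_cluster l : kkt l ->
  (forall d, 0 < d -> forall T, exists2 t, (T <= t)%N & sqn (g t - l) < d) ->
  forall d, 0 < d -> exists T, forall t, (T <= t)%N -> sqn (g t - l) < d.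
Proof.
move=> l_kkt l_cluster d d_gt0.
have [C C_gt0 sqn_le] := Hquad_coercive; have [C' C'_ge0 Hquad_le] := Hquad_bounded.
have CC_gt0 : 0 < C * C' + 1 by rewrite ltr_wpDl // mulr_ge0 // ltW.
have [T _ gT_near] := l_cluster (d / (C * C' + 1)) (divr_gt0 d_gt0 CC_gt0) 0%N.
exists T => t Tt; apply: le_lt_trans (sqn_le _) _.
have := ler_wpM2l (ltW C_gt0) (Hquad_dist_nonincr l_kkt Tt).
have := ler_wpM2l (ltW C_gt0) (Hquad_le (g T - l)).
have := ler_wpM2l (mulr_ge0 (ltW C_gt0) C'_ge0) (ltW gT_near).
have e_gt0 : 0 < d / (C * C' + 1) by rewrite divr_gt0.
have : d / (C * C' + 1) * (C * C' + 1) = d by rewrite mulfVK // gt_eqF.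
lra.
Qed.

Theorem ladmm_convergence s : kkt s ->
  exists l : state, [/\ kkt l,
    (g t).1.1 @[t --> \oo] --> l.1.1, (g t).1.2 @[t --> \oo] --> l.1.2,
    (g t).2 @[t --> \oo] --> l.2 &
    forall T, Hquad (g T - g T.+1) <= T.+1%:R^-1 * Hquad (g 0 - l)].
Proof.
move=> s_kkt; have [l l_cluster] := trajectory_cluster s_kkt.
have l_kkt : kkt l.
  apply/kkt_step_vi; rewrite -[X in step_vi _ X](cluster_fixed _); first exact: ladmm_step_vi.
  move=> d d_gt0; have [T T_steps] := steps_vanish s_kkt d_gt0.
  by have [t Tt /ltW gt_near] := l_cluster d d_gt0 T; exists t; split; [|exact: T_steps].
have g_cvg := cvg_to_kkt_cluster l_kkt l_cluster.
exists l; split => //; last by move=> T; rewrite ler_pdivlMl // Hquad_step_rate.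
all: apply: cvg_dot_dist => d /g_cvg[T T_near]; exists T => t /T_near.
all: move=> lt_d; case: (dot_le_sqn (g t - l)) => b_le z_le u_le.
- exact: le_lt_trans b_le lt_d.
- exact: le_lt_trans z_le lt_d.
- exact: le_lt_trans u_le lt_d.
Qed.

End Trajectory.

End LinearizedADMM.

(** * The Dantzig selector problem *)

Section Lagrangian.
Variables (R : realType) (n p : nat) (X : 'M[R]_(n, p)) (y : 'cV[R]_n) (lam : R).
Hypothesis lam_ge0 : 0 <= lam.
Local Notation A := (X^T *m X).
Local Notation c := (X^T *m y).
Local Notation c0 := (n%:R * lam).

Lemma lagrangian_in_box b z u : in_box c0 z ->
  lagrangian X y lam b z u = (norm1 b - dot u (res A c b z))%:E.
Proof.
move=> z_box; rewrite /lagrangian /deltaZ0 ifT; last by apply/forallP.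
by rewrite dot_trmx adde0 -EFinD.
Qed.

Lemma lagrangian_out_box b z u : ~ in_box c0 z -> lagrangian X y lam b z u = +oo%E.
Proof.
move=> z_out; rewrite /lagrangian /deltaZ0 ifF ?addey ?addye //.
by apply/negP => /forallP.
Qed.

Lemma res_kkt bs zs b z : res A c bs zs = 0 -> res A c b z = A *m (b - bs) - (z - zs).
Proof.
move=> res0; rewrite -[LHS]subr0 -res0 /res mulmxBr.
by apply/matrixP => i j; rewrite !mxE; ring.
Qed.

Lemma saddle_kkt bs zs us : saddle X y lam bs zs us <-> kkt A c c0 (bs, zs, us).
Proof.
have c0_ge0 : 0 <= c0 by rewrite mulr_ge0.
split=> [bzu_saddle | [b_opt zs_box z_opt res0] b z u].
- have zs_box : in_box c0 zs.
    apply: contrapT => /lagrangian_out_box zs_out; have := (bzu_saddle 0 0 us).2.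
    by rewrite zs_out lagrangian_in_box // => i; rewrite mxE normr0.
  have res0 : res A c bs zs = 0.
    have := (bzu_saddle bs zs (us - res A c bs zs)).1; rewrite !lagrangian_in_box // lee_fin.
    by rewrite dotBl => ?; apply/eqP; rewrite -dot_eq0 eq_le dot_ge0 andbT; lra.
  split => // [x | x x_box].
    have := (bzu_saddle x zs us).2; rewrite !lagrangian_in_box // lee_fin res0 dot0r subr0.
    by rewrite (res_kkt _ _ res0) subrr subr0 dot_mulmx trmxK; lra.
  have := (bzu_saddle bs x us).2; rewrite !lagrangian_in_box // lee_fin res0 dot0r subr0.
  by rewrite (res_kkt _ _ res0) subrr mulmx0 sub0r dotNr; lra.
- split; first by rewrite !lagrangian_in_box // res0 !dot0r.
  have [z_box|/lagrangian_out_box ->] := pselect (in_box c0 z); last exact: leey.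
  rewrite !lagrangian_in_box // lee_fin res0 dot0r subr0 (res_kkt _ _ res0) dotBr.
  by have := b_opt b; have := z_opt z z_box; rewrite dot_mulmx trmxK; lra.
Qed.

End Lagrangian.

Lemma stackB (R : realType) (p : nat) (b z u b' z' u' : 'cV[R]_p) :
  stack b z u - stack b' z' u' = stack (b - b') (z - z') (u - u').
Proof. by rewrite /stack !opp_col_mx !add_col_mx. Qed.

Lemma Hnorm2_stack (R : realType) (n p : nat) (X : 'M[R]_(n, p)) (mu eta : R)
    (b z u : 'cV[R]_p) : mu != 0 ->
  Hnorm2 (Hmat X mu eta) (stack b z u) = Hquad (X^T *m X) mu eta (b, z, u).
Proof.
move=> mu_neq0; set A := X^T *m X.
have A_sym : A^T = A by rewrite /A trmx_mul trmxK.
have mxE00 (M N : 'M[R]_1) : (M + N) 0 0 = M 0 0 + N 0 0 by rewrite mxE.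
rewrite /Hnorm2 /Hmat /stack -/A A_sym -mulmxA !mul_block_col !mul_col_mx !mul_row_col.
rewrite !tr_col_mx !add_col_mx !mul_row_col !mul0mx !addr0 !add0r [mu *: _ + _]addrC subrK.
rewrite !mul_scalar_mx mulNmx !mul1mx !mulmxDr !mxE00 !dot_trmx !(dotDr, dotZr, dotNr).
rewrite mulNmx mul1mx dotNr /Hquad /Hform (dotC u (A *m b)) (dotC u z).
by rewrite dot_mulmx A_sym (dotC b (A *m u)); ring.
Qed.

Section Blocks.
Variables (R : realType) (p K : nat) (blk : 'I_p -> 'I_K).

Lemma selT_mulmxE (I : {set 'I_p}) (v : 'cV[R]_p) k :
  ((sel R I)^T *m v) k 0 = v (enum_val k) 0.
Proof.
rewrite mxE (bigD1 (enum_val k)) //= big1 ?addr0 => [|j j_neq].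
  by rewrite !mxE eqxx mul1r.
by rewrite !mxE (negbTE j_neq) mul0r.
Qed.

Lemma sel_selT_mulmxE (I : {set 'I_p}) (v : 'cV[R]_p) j :
  (sel R I *m ((sel R I)^T *m v)) j 0 = if j \in I then v j 0 else 0.
Proof.
rewrite mxE; under eq_bigr do rewrite selT_mulmxE mxE.
case: (boolP (j \in I)) => [j_in|j_out].
  rewrite (bigD1 (enum_rank_in j_in j)) //= enum_rankK_in // eqxx mul1r big1 ?addr0 //.
  move=> k k_neq; case: eqP => [j_eq|]; last by rewrite mul0r.
  move/enum_val_inj: (etrans (enum_rankK_in j_in j_in) j_eq) => k_eq.
  by rewrite k_eq eqxx in k_neq.
rewrite big1 // => k _; case: eqP => [j_eq|]; last by rewrite mul0r.
by move: j_out; rewrite j_eq enum_valP.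
Qed.

Lemma sum_block_sel (v : 'cV[R]_p) :
  \sum_(i < K) sel R (block blk i) *m ((sel R (block blk i))^T *m v) = v.
Proof.
apply/matrixP => j l; rewrite (ord1 l) summxE.
under eq_bigr do rewrite sel_selT_mulmxE inE.
by rewrite -big_mkcond /= (big_pred1 (blk j)) // => i; rewrite /= eq_sym.
Qed.

Lemma soft_blocks (tau : R) (v w : 'cV[R]_p) :
  (forall i, (sel R (block blk i))^T *m v = soft tau ((sel R (block blk i))^T *m w)) ->
  v = soft tau w.
Proof.
move=> v_blocks; apply/matrixP => j l; rewrite (ord1 l).
have j_in : j \in block blk (blk j) by rewrite inE.
have := congr1 (fun M : 'cV[R]_#|block blk (blk j)| => M (enum_rank_in j_in j) 0)
  (v_blocks (blk j)).
by rewrite /= [in RHS]mxE !selT_mulmxE enum_rankK_in // mxE.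
Qed.

End Blocks.

Section Algorithms.
Variables (R : realType) (n p K : nat) (X : 'M[R]_(n, p)) (y : 'cV[R]_n)
  (lam mu eta : R) (blk : 'I_p -> 'I_K) (beta z u : nat -> 'cV[R]_p).
Local Notation step := (ladmm_step (X^T *m X) (X^T *m y) (n%:R * lam) mu eta).

Lemma algorithm1_ladmm : algorithm1 X y lam mu eta beta z u ->
  forall t, (beta t.+1, z t.+1, u t.+1) = step (beta t, z t, u t).
Proof.
by move=> alg t; case: (alg t) => b_step z_step u_step; rewrite u_step b_step z_step.
Qed.

Lemma algorithm2_ladmm : algorithm2 blk X y lam mu eta beta z u ->
  forall t, (beta t.+1, z t.+1, u t.+1) = step (beta t, z t, u t).
Proof.
move=> alg t; have [b_step z_step u_step] := alg t.
have sum_blocks (v : 'cV[R]_p) : \sum_(i < K)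
    (X^T *m (X *m sel R (block blk i))) *m ((sel R (block blk i))^T *m v) = X^T *m X *m v.
  rewrite -[in RHS](sum_block_sel blk v) mulmx_sumr; apply: eq_bigr => i _.
  by rewrite !mulmxA.
have b_eq : beta t.+1 = soft eta^-1 (beta t + eta^-1 *: ((X^T *m X)^T *m u t)).
  apply: (@soft_blocks _ _ _ blk) => i; rewrite b_step mulmxDr -scalemxAr.
  by rewrite !trmx_mul !trmxK !mulmxA.
by rewrite u_step !sum_blocks b_eq z_step.
Qed.

End Algorithms.

Theorem theorem2 (R : realType) (n p K : nat) (X : 'M[R]_(n, p)) (y : 'cV[R]_n)
  (lam mu lmax : R) (blk : 'I_p -> 'I_K) (beta z u : nat -> 'cV[R]_p) :
  0 <= lam -> 0 < mu ->
  is_lambda_max (mu *: ((X^T *m X)^T *m (X^T *m X))) lmax ->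
  (0 < K)%N ->
  (forall i : 'I_K, exists j : 'I_p, blk j = i) ->
  (algorithm1 X y lam mu (lmax + 1) beta z u \/
   algorithm2 blk X y lam mu (lmax + 1) beta z u) ->
  (exists bs zs us : 'cV[R]_p, saddle X y lam bs zs us) ->
  exists bs zs us : 'cV[R]_p,
    saddle X y lam bs zs us /\
    beta t @[t --> \oo] --> bs /\
    z t @[t --> \oo] --> zs /\
    u t @[t --> \oo] --> us /\
    (forall T : nat, (0 < T)%N ->
       Hnorm2 (Hmat X mu (lmax + 1))
         (stack (beta T) (z T) (u T) - stack (beta T.+1) (z T.+1) (u T.+1))
       <= (T.+1)%:R^-1 *
          Hnorm2 (Hmat X mu (lmax + 1)) (stack (beta 0) (z 0) (u 0) - stack bs zs us)).
Proof.
move=> lam_ge0 mu_gt0 lmax_max _ _ alg [bs [zs [us /saddle_kkt s_kkt]]].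
have c0_ge0 : 0 <= n%:R * lam by rewrite mulr_ge0.
have [lmax_ge0 A_le] := lambda_max_gram mu_gt0 lmax_max.
have eta_ge1 : 1 <= lmax + 1 by rewrite lerDr.
have A_bound v : mu * dot (X^T *m X *m v) (X^T *m X *m v) <= (lmax + 1 - 1) * dot v v.
  by rewrite addrK A_le.
pose g t := (beta t, z t, u t).
have g_step t : g t.+1 = ladmm_step (X^T *m X) (X^T *m y) (n%:R * lam) mu (lmax + 1) (g t).
  by case: alg => [/algorithm1_ladmm | /algorithm2_ladmm]; apply.
have [[[lb lz] lu] [l_kkt b_cvg z_cvg u_cvg rate]] :=
  ladmm_convergence c0_ge0 mu_gt0 eta_ge1 A_bound g_step (s_kkt lam_ge0).
exists lb, lz, lu; split; first exact/saddle_kkt.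
do 3 (split; first by []).
by move=> T _; rewrite !stackB !Hnorm2_stack ?gt_eqF //; exact: rate.
Qed.
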